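(* Let $R$ be a finite chain ring, $r\ge1$, and let $A=\bigcup_{i=1}^lA_i\subseteq R$ be a well-conditioned set partitioned into $l$ blocks with $|A_i|=r+1$, so $n=|A|=(r+1)l$. Assume there is $g\in\mathcal F_A$ of degree $r+1$ such that $1,g,\dots,g^{l-1}$ span $\mathcal F_A$ as an $R$-module. Let $\mathcal F_A^r=\bigoplus_{i=0}^{r-1}\mathcal F_A\,x^i$, let $K=rt$ with $1\le t\le l$, and let $\Phi:R^K\to\mathcal F_A^r$, $a\mapsto f_a$, be an injective $R$-linear map. Let $\mathcal C=\{(f_a(\alpha))_{\alpha\in A}: a\in R^K\}$. Then $\mathcal C$ is a free $R$-linear code of length $n$ and rank $K$, each coordinate $\alpha\in A_j$ can be recovered from the coordinates in $A_j\setminus\{\alpha\}$ (so $\mathcal C$ has locality $r$), and its minimum distance satisfies $$d\ \ge\ n-\max_{a\in R^K\setminus\{0\}}\deg f_a .$$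
   Context: A finite chain ring is a finite commutative local ring whose ideals are totally ordered by inclusion; $N(R)$ is its unit group. A subset $T\subseteq N(R)$ is subtractive if $a-b\in N(R)$ for all distinct $a,b\in T$. A set $\{a_1,\dots,a_n\}\subseteq R$ is well-conditioned if either it is a subtractive subset of $N(R)$, or for some $i$ the set without $a_i$ is a subtractive subset of $N(R)$ and $a_i$ is a zero divisor (or $0$). For a partition $A=\bigcup_i A_i$, $\mathcal F_A=\{f\in R[x]:\deg f<|A|,\ f$ constant on each $A_i\}$. *)

From HB Require Import structures.
From mathcomp Require Import all_boot all_order all_algebra.
Set Implicit Arguments. Unset Strict Implicit. Unset Printing Implicit Defensive.
Import Order.TTheory GRing.Theory Num.Theory.
Local Open Scope ring_scope.

Section ChainRing.
Variable R : finComUnitRingType.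

Definition is_ideal (I : {set R}) : Prop :=
  [/\ 0 \in I,
      (forall x y, x \in I -> y \in I -> x + y \in I) &
      (forall c x, x \in I -> c * x \in I)].

Definition is_maximal_ideal (M : {set R}) : Prop :=
  [/\ is_ideal M, M != [set: R] &
      forall J, is_ideal J -> M \subset J -> J = M \/ J = [set: R]].

Definition local_ring : Prop :=
  exists M, is_maximal_ideal M /\ forall M', is_maximal_ideal M' -> M' = M.

(* finite chain ring: finite commutative local ring whose ideals are totally
   ordered by inclusion (finiteness and commutativity come from the type) *)
Definition chain_ring : Prop :=
  local_ring /\
  forall I J, is_ideal I -> is_ideal J -> I \subset J \/ J \subset I.

Definition zero_divisor (a : R) : Prop := exists2 b, b != 0 & a * b = 0.

Definition subtractive (T : {set R}) : Prop :=
  (forall a, a \in T -> a \is a GRing.unit) /\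
  (forall a b, a \in T -> b \in T -> a != b -> (a - b) \is a GRing.unit).

Definition well_conditioned (A : {set R}) : Prop :=
  subtractive A \/
  exists2 a, a \in A & subtractive (A :\ a) /\ (zero_divisor a \/ a = 0).

Definition in_FA (l : nat) (Ablk : 'I_l -> {set R}) (f : {poly R}) : Prop :=
  (size f <= #|\bigcup_(i < l) Ablk i|)%N /\
  forall i x y, x \in Ablk i -> y \in Ablk i -> f.[x] = f.[y].

Definition in_FAr (l r : nat) (Ablk : 'I_l -> {set R}) (f : {poly R}) : Prop :=
  exists fs : 'I_r -> {poly R},
    (forall i, in_FA Ablk (fs i)) /\ f = \sum_(i < r) fs i * 'X^i.

Definition eval_word (A : {set R}) (f : {poly R}) : 'rV[R]_#|A| :=
  \row_(k < #|A|) f.[enum_val k].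

Definition hamming (n : nat) (c1 c2 : 'rV[R]_n) : nat :=
  #|[set k : 'I_n | c1 0 k != c2 0 k]|.

End ChainRing.

From HB Require Import structures.
From mathcomp Require Import all_boot all_order all_algebra.
From mathcomp Require Import zify.
From Stdlib Require Import Classical.
Set Implicit Arguments. Unset Strict Implicit. Unset Printing Implicit Defensive.
Import Order.TTheory GRing.Theory Num.Theory.
Local Open Scope ring_scope.

(* In a local ring a nonunit minus a unit is a unit, so distinct points of a
   well-conditioned set differ by units; hence a nonzero polynomial has fewer
   roots in such a set than its size, exactly as over a field.  Every f in
   F_A^r has size below n = (r+1) l, so evaluation on A is injective on
   F_A^r (freeness), and two codewords agree at no more than deg (f_a - f_b)
   points (distance).  On a block A_j the components of f are constant, so f
   agrees there with a polynomial of degree < r, which is determined by its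
   values at the r points of A_j minus alpha (locality). *)

Section LocalRing.
Variable R : finComUnitRingType.
Implicit Types (I : {set R}) (a b u x : R).

Lemma ideal_sub_maximal I :
  is_ideal I -> I != setT -> exists2 M, is_maximal_ideal M & I \subset M.
Proof.
move: {2}#|~: I| (leqnn #|~: I|) => k; elim: k I => [|k IH] I hk hI hIT.
  move: hk; rewrite leqn0 cards_eq0 => /eqP E.
  by rewrite -(setCK I) E setC0 eqxx in hIT.
have [hM|hM] := classic (is_maximal_ideal I); first by exists I.
have [J [hJ sIJ nJI nJT]] : exists J, [/\ is_ideal J, I \subset J, J != I & J != setT].
  apply: NNPP => noJ; apply: hM; split=> // J hJ sIJ.
  have [->|nJI] := eqVneq J I; first by left.
  have [->|nJT] := eqVneq J setT; first by right.
  by case: noJ; exists J.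
have ltCJI : (#|~: J| < #|~: I|)%N.
  have ltIJ : (#|I| < #|J|)%N by rewrite proper_card // properEneq sIJ andbT eq_sym.
  by have := cardsC I; have := cardsC J; lia.
have [M hM' sJM] := IH J (leq_trans ltCJI hk) hJ nJT.
by exists M; last exact: subset_trans sIJ sJM.
Qed.

Lemma ideal_unit_setT I u : is_ideal I -> u \is a GRing.unit -> u \in I -> I = setT.
Proof.
move=> [_ _ hmul] hu uI; apply/setP => z; rewrite inE.
by rewrite -[z](mulrVK hu); apply: hmul.
Qed.

Lemma principal_is_ideal x : is_ideal [set x * c | c : R].
Proof.
split.
- by apply/imsetP; exists 0; rewrite // mulr0.
- move=> _ _ /imsetP[c _ ->] /imsetP[d _ ->].
  by apply/imsetP; exists (c + d); rewrite // mulrDr.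
- move=> c _ /imsetP[d _ ->].
  by apply/imsetP; exists (c * d); rewrite // mulrCA.
Qed.

Lemma local_nonunit_maximal :
  local_ring R ->
  exists2 M, is_maximal_ideal M & forall x, x \isn't a GRing.unit -> x \in M.
Proof.
case=> M [hM uniqM]; exists M => // x xN.
have xI : x \in [set x * c | c : R] by apply/imsetP; exists 1; rewrite // mulr1.
have [|M' hM' sIM'] := ideal_sub_maximal (principal_is_ideal x).
  apply: contra xN => /eqP xT.
  have /imsetP[c _ c1] : 1 \in [set x * c | c : R] by rewrite xT inE.
  by apply/unitrP; exists c; rewrite mulrC -c1.
by rewrite -(uniqM M' hM') (subsetP sIM' _ xI).
Qed.

Lemma local_subr_unit a b :
  local_ring R -> a \isn't a GRing.unit -> b \is a GRing.unit -> a - b \is a GRing.unit.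
Proof.
move=> /local_nonunit_maximal[M [idM nMT _] memM] aN bU.
apply: contraR (nMT) => /memM abM.
have bM : b \in M.
  have [_ hadd hmul] := idM.
  have := hadd _ _ (memM _ aN) (hmul (-1) _ abM).
  by rewrite mulN1r opprB addrC subrK.
by rewrite (ideal_unit_setT idM bU bM).
Qed.

Lemma zero_divisor_nonunit a : zero_divisor a -> a \isn't a GRing.unit.
Proof.
case=> c nzc ac0; apply: contra nzc => aU.
by rewrite -[c](mulKr aU) ac0 mulr0.
Qed.

Lemma well_conditioned_subr_unit A :
  local_ring R -> well_conditioned A ->
  {in A &, forall x y, x != y -> x - y \is a GRing.unit}.
Proof.
move=> hloc [[_ hA] //|[a aA [[hu hd] zdA]]].
have aN : a \isn't a GRing.unit.
  by case: zdA => [/zero_divisor_nonunit //|->]; rewrite unitr0.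
have a_sub_unit z : z \in A -> z != a -> a - z \is a GRing.unit.
  by move=> zA za; rewrite local_subr_unit // hu // !inE za.
move=> x y xA yA nxy.
have [xa0 | xa] := eqVneq x a.
  by subst x; apply: a_sub_unit; rewrite // eq_sym.
have [ya0 | ya] := eqVneq y a.
  by subst y; rewrite -opprB unitrN; apply: a_sub_unit.
by rewrite hd // !inE ?xa ?ya.
Qed.

End LocalRing.

Section RootsOnUnitDifferenceSets.
Variable R : finComUnitRingType.
Variable A : {set R}.
Hypothesis subA_unit : {in A &, forall x y, x != y -> x - y \is a GRing.unit}.

Lemma uniq_roots_sub (s : seq R) : uniq s -> {subset s <= A} -> uniq_roots s.
Proof.
elim: s => //= x s IH /andP[xs us] sA.
have sA' : {subset s <= A} by move=> y ys; apply: sA; rewrite inE ys orbT.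
rewrite IH // andbT; apply/allP => y ys; rewrite /diff_roots mulrC eqxx.
apply: subA_unit; [exact: sA' | by apply: sA; rewrite inE eqxx |].
by apply: contraNneq xs => <-.
Qed.

Lemma card_roots_lt_size (f : {poly R}) :
  f != 0 -> (#|[set x in A | root f x]| < size f)%N.
Proof.
move=> nzf; rewrite cardE; apply: max_ring_poly_roots => //.
  by apply/allP => x; rewrite mem_enum inE => /andP[].
by apply: uniq_roots_sub (enum_uniq _) _ => x; rewrite mem_enum inE => /andP[].
Qed.

Lemma vanishing_poly_eq0 (f : {poly R}) :
  (size f <= #|A|)%N -> {in A, forall x, root f x} -> f = 0.
Proof.
move=> sf fA; apply/eqP; apply: contraTT sf => nzf; rewrite -ltnNge.
have -> : A = [set x in A | root f x].
  by apply/setP => x; rewrite inE andb_idr //; exact: fA.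
exact: card_roots_lt_size.
Qed.

End RootsOnUnitDifferenceSets.

Section EvalWord.
Variables (R : finComUnitRingType) (A : {set R}).

Fact eval_word_is_linear : linear (@eval_word R A).
Proof. by move=> c f h; apply/rowP => k; rewrite !mxE hornerD hornerZ. Qed.

HB.instance Definition _ :=
  GRing.isLinear.Build R {poly R} 'rV[R]_#|A| *:%R (@eval_word R A) eval_word_is_linear.

Lemma eval_word_eq0P (f : {poly R}) :
  reflect {in A, forall x, root f x} (eval_word A f == 0).
Proof.
apply: (iffP eqP) => [f0 x xA | fA]; last first.
  by apply/rowP => k; rewrite !mxE; apply/eqP/fA/enum_valP.
have := congr1 (fun c : 'rV[R]_#|A| => c 0 (enum_rank_in xA x)) f0.
by rewrite !mxE enum_rankK_in // => fx0; rewrite rootE fx0.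
Qed.

Lemma hamming_eval_word (f h : {poly R}) :
  hamming (eval_word A f) (eval_word A h) = (#|A| - #|[set x in A | root (f - h) x]|)%N.
Proof.
rewrite /hamming; set S := [set k : 'I_#|A| | _].
have rootB x : root (f - h) x = (f.[x] == h.[x]).
  by rewrite rootE hornerD hornerN subr_eq0.
have -> : [set x in A | root (f - h) x] = enum_val @: ~: S.
  apply/setP => x; rewrite inE rootB; apply/andP/imsetP => [[xA fhx]|[k kS ->]].
    exists (enum_rank_in xA x); last by rewrite enum_rankK_in.
    by rewrite !inE negbK !mxE enum_rankK_in.
  by move: kS; rewrite !inE negbK !mxE enum_valP.
rewrite card_imset; last exact: enum_val_inj.
by have := cardsC S; rewrite card_ord; move: #|S| #|~: S| => a b; lia.
Qed.

End EvalWord.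

Section Blocks.
Variables (R : finComUnitRingType) (l r : nat) (Ablk : 'I_l -> {set R}).

Lemma card_bigcup_blocks m :
  (forall i, #|Ablk i| = m) -> (forall i j, i != j -> [disjoint Ablk i & Ablk j]) ->
  #|\bigcup_(i < l) Ablk i| = (m * l)%N.
Proof.
move=> hsize hdisj; rewrite -sum1_card partition_disjoint_bigcup //.
under eq_bigr do rewrite sum1_card hsize.
by rewrite sum_nat_const card_ord mulnC.
Qed.

Lemma size_span_powers (g : {poly R}) (c : 'I_l -> R) :
  (size (\sum_(i < l) c i *: g ^+ i)%R <= ((size g).-1 * l.-1).+1)%N.
Proof.
apply: leq_trans (size_sum _ _ _) _; apply/bigmax_leqP => i _.
apply: leq_trans (size_scale_leq _ _) _; apply: leq_trans (size_poly_exp_leq _ _) _.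
by rewrite ltnS leq_mul2l; apply/orP; right; have := ltn_ord i; lia.
Qed.

Lemma size_in_FAr_lt (g f : {poly R}) :
  (forall h, in_FA Ablk h -> exists c : 'I_l -> R, h = \sum_(i < l) c i *: g ^+ i) ->
  size g = r.+2 -> (0 < l)%N -> in_FAr r Ablk f -> (size f < r.+1 * l)%N.
Proof.
move=> hspan hg hl [fs [hfs ->]].
have : (size (\sum_(i < r) fs i * 'X^i)%R <= r.+1 * l.-1 + r)%N.
  apply: leq_trans (size_sum _ _ _) _; apply/bigmax_leqP => i _.
  have [c ->] := hspan _ (hfs i).
  apply: leq_trans (size_polyMleq _ _) _; rewrite size_polyXn.
  have := size_span_powers g c; rewrite hg /=.
  by have := ltn_ord i; move: (size _) (nat_of_ord i) => s k; lia.
by rewrite -{2}(prednK hl) mulnS; lia.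
Qed.

Lemma in_FAr_local (j : 'I_l) (alpha : R) (f : {poly R}) :
  {in Ablk j &, forall x y, x != y -> x - y \is a GRing.unit} -> #|Ablk j| = r.+1 ->
  in_FAr r Ablk f -> alpha \in Ablk j ->
  {in Ablk j :\ alpha, forall x, root f x} -> root f alpha.
Proof.
move=> hU hsz [fs [hfs ->]] aj froot.
pose h := \sum_(i < r) (fs i).[alpha] *: 'X^i.
have fh x : x \in Ablk j -> (\sum_(i < r) fs i * 'X^i).[x] = h.[x].
  move=> xj; rewrite !horner_sum; apply: eq_bigr => i _.
  by rewrite hornerM hornerZ !hornerXn ((hfs i).2 j x alpha xj aj).
have h0 : h = 0.
  apply: (@vanishing_poly_eq0 _ (Ablk j :\ alpha)).
  - by move=> x y /setD1P[_ xj] /setD1P[_ yj]; exact: hU.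
  - have := cardsD1 alpha (Ablk j); rewrite aj hsz => hcard.
    apply: leq_trans (size_sum _ _ _) _; apply/bigmax_leqP => i _.
    apply: leq_trans (size_scale_leq _ _) _.
    by rewrite size_polyXn; have := ltn_ord i; lia.
  - by move=> x xD; rewrite rootE -fh; [exact: froot | case/setD1P: xD].
by rewrite rootE fh // h0 horner0.
Qed.

End Blocks.

Lemma linear_row_sum_delta (R : comNzRingType) (K : nat) (V : lmodType R)
    (L : {linear 'rV[R]_K -> V}) (a : 'rV[R]_K) :
  L a = \sum_(k < K) a 0 k *: L (delta_mx 0 k).
Proof.
by rewrite {1}(row_sum_delta a) linear_sum; under eq_bigr do rewrite linearZ.
Qed.

Theorem mainTheorem11
  (R : finComUnitRingType) (hR : chain_ring R)
  (r l : nat) (hr : (1 <= r)%N)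
  (Ablk : 'I_l -> {set R})
  (hsize : forall i, #|Ablk i| = r.+1)
  (hdisj : forall i j, i != j -> [disjoint Ablk i & Ablk j])
  (hwc : well_conditioned (\bigcup_(i < l) Ablk i))
  (g : {poly R}) (hg : in_FA Ablk g) (hdeg : size g = r.+2)
  (hspan : forall f, in_FA Ablk f ->
             exists c : 'I_l -> R, f = \sum_(i < l) c i *: g ^+ i)
  (t : nat) (ht : (1 <= t <= l)%N)
  (Phi : {linear 'rV[R]_(r * t) -> {poly R}})
  (hinj : injective Phi)
  (himg : forall a, in_FAr r Ablk (Phi a)) :
  let A := \bigcup_(i < l) Ablk i in
  let n := #|A| in
  let K := (r * t)%N in
  let inC := fun c : 'rV[R]_n => exists a, c = eval_word A (Phi a) in
  (* C is an R-linear code of length n *)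
  [/\ (forall c1 c2, inC c1 -> inC c2 -> inC (c1 + c2)),
      (forall (x : R) c, inC c -> inC (x *: c)),
  (* C is free of rank K *)
      (exists b : 'I_K -> 'rV[R]_n,
         (forall k, inC (b k)) /\
         forall c, inC c -> exists! coef : 'rV[R]_K,
             c = \sum_(k < K) coef 0 k *: b k),
  (* locality r: each coordinate alpha in A_j is determined by A_j \ {alpha} *)
      (forall j alpha, alpha \in Ablk j -> forall a a',
         (forall beta, beta \in Ablk j :\ alpha -> (Phi a).[beta] = (Phi a').[beta]) ->
         (Phi a).[alpha] = (Phi a').[alpha]) &
  (* minimum distance bound *)
      (forall c1 c2, inC c1 -> inC c2 -> c1 != c2 ->
         (n - \max_(a : 'rV[R]_K | a != 0%R) (size (Phi a)).-1 <= hamming c1 c2)%N)].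
Proof.
move=> A n K inC.
have hl : (0 < l)%N by case/andP: ht; apply: leq_trans.
have hn : n = (r.+1 * l)%N by exact: card_bigcup_blocks.
have hU := well_conditioned_subr_unit hR.1 hwc.
have sizePhi a : (size (Phi a) <= n)%N by rewrite hn ltnW // (size_in_FAr_lt hspan).
have eval_Phi_inj : injective (eval_word A \o Phi).
  apply: raddf_inj => a /eqP/eval_word_eq0P Pa0.
  by apply: hinj; rewrite linear0; exact: (vanishing_poly_eq0 hU (sizePhi a) Pa0).
split.
- by move=> _ _ [a1 ->] [a2 ->]; exists (a1 + a2); rewrite !linearD.
- by move=> x _ [a ->]; exists (x *: a); rewrite !linearZ.
- exists (fun k => eval_word A (Phi (delta_mx 0 k))).
  split=> [k|_ [a ->]]; first by exists (delta_mx 0 k).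
  exists a; split=> [|b]; first exact: (linear_row_sum_delta (eval_word A \o Phi)).
  by rewrite -[RHS](linear_row_sum_delta (eval_word A \o Phi)) => /eval_Phi_inj.
- move=> j alpha aj a a' hloc; apply/eqP; rewrite -subr_eq0 -hornerN -hornerD -linearB.
  have sAj : Ablk j \subset A by exact: bigcup_sup.
  apply: (in_FAr_local _ (hsize j) (himg _) aj).
    by move=> x y xj yj; apply: hU; exact: (subsetP sAj).
  by move=> x xD; rewrite rootE linearB hornerD hornerN hloc // subrr.
- move=> _ _ [a1 ->] [a2 ->] ne.
  have nza : a1 - a2 != 0 by apply: contraNneq ne => /subr0_eq ->.
  have nzf : Phi (a1 - a2) != 0.
    by apply: contra nza => /eqP; rewrite -(linear0 Phi) => /hinj ->.
  rewrite hamming_eval_word -linearB leq_sub2l //.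
  pose F (b : 'rV[R]_K) := (size (Phi b)).-1.
  apply: leq_trans _ (@leq_bigmax_cond _ (fun b => b != 0) F _ nza).
  have lt_roots := card_roots_lt_size hU nzf.
  by rewrite -ltnS (ltn_predK lt_roots).
Qed.
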